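(* Let $A$ be a DFA over a finite alphabet $\Sigma$ and let $S=s_1,\ldots,s_l$ be any non-empty sequence of strings $s_i\in\Sigma^*$; put $s_0=\lambda$. For any execution of prefix-free IDS on $S$ and each $0\le t\le l$, the hypothesis $M_t$ is compatible with $A$ on $\{\lambda,s_1,\ldots,s_t\}$, i.e. for each $0\le j\le t$: $s_j\in L(A)$ if and only if $\lambda\in E_{i_t}(s_j)$, where $i_t$ is the greatest integer with $K(i_t)=t$.
   Context: Let $A=\langle\Sigma,Q,F,q_0,\delta\rangle$ be a DFA with language $L(A)$; $\lambda$ is the empty string; membership queries to $A$ are answered correctly. Let $d_0$ be a fresh symbol not in $\Sigma^*$; $f(d_0,b)=d_0$, $f(\alpha,b)=\alpha b$ for $\alpha\in\Sigma^*$; $U\oplus V=(U-V)\cup(V-U)$. Refinement procedure (w.r.t. $P'_k$, $T_k$): while there exist $\alpha,\beta\in P'_k$, $b\in\Sigma$ with $E_i(\alpha)=E_i(\beta)$ but $E_i(f(\alpha,b))\neq E_i(f(\beta,b))$: choose (nondeterministically) such $\alpha,\beta,b$ and $\gamma\in E_i(f(\alpha,b))\oplus E_i(f(\beta,b))$, set $v_{i+1}=b\gamma$, increase $i$, and for each $\alpha'\in T_k$ set $E_i(\alpha')=E_{i-1}(\alpha')\cup\{v_i\}$ if $\alpha'v_i\in L(A)$, else $E_i(\alpha')=E_{i-1}(\alpha')$; always $E_i(d_0)=\emptyset$. Construction procedure: states $E_i(\alpha)$, $\alpha\in T_k$; initial state $E_i(\lambda)$; accepting states those containing $\lambda$; for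 $\alpha\in P'_k$: if $E_i(\alpha)=\emptyset$ add self-loops for all $b$, else $\delta(E_i(\alpha),b)=E_i(f(\alpha,b))$; for $\beta\in T_k-P'_k$ with $E_i(\beta)\neq E_i(\alpha)$ for all $\alpha\in P'_k$ and $E_i(\beta)\ne\emptyset$, $\delta(E_i(\beta),b)=\emptyset$ for all $b$. Prefix-free IDS on $S$: initialize $i=k=t=0$, $v_0=\lambda$, $P_0=\{\lambda\}$, $P'_0=P_0\cup\{d_0\}$, $T_0=\{\lambda\}\cup\Sigma$, $E_0(\alpha)=\{\lambda\}$ if $\alpha\in L(A)$ else $\emptyset$ ($\alpha\in T_0$); refine; construct $M_0$. For each string $\alpha$ of $S$ in order: increase $k,t$ by one; $P_k=P_{k-1}\cup\{\alpha\}$, $P'_k=P_k\cup\{d_0\}$, $T_k=T_{k-1}\cup\{\alpha\}\cup\{\alpha b:b\in\Sigma\}$; for $\beta\in T_k-T_{k-1}$ set $E_i(\beta)=\{v_j:0\le j\le i,\beta v_j\in L(A)\}$; refine; set $M_t=M_{t-1}$ if $M_{t-1}$ accepts $\alpha$ iff $\alpha\in L(A)$, else construct $M_t$. $E_n(\alpha)$ denotes the value assigned to $E_i(\alpha)$ while $i=n$. Re-indexing function: $K:\mathbb N\to\mathbb N$ is the unique monotonically increasing function such that $K(n)$ is the least integer $m$ such that the variable $k$ has value $m$ while the variable $i$ has value $n$. *)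

From mathcomp Require Import all_boot.
Set Implicit Arguments.
Unset Strict Implicit.
Unset Printing Implicit Defensive.

Record dfa (Sigma : finType) := DFA {
  dstate : finType;
  dinit  : dstate;
  dfinal : {set dstate};
  dtrans : dstate -> Sigma -> dstate }.

Definition accepts (Sigma : finType) (A : dfa Sigma) (w : seq Sigma) : Prop :=
  foldl (@dtrans _ A) (dinit A) w \in dfinal A.

(* Elements of P'_k / T_k : a string (Some alpha) or the fresh d_0 (None) *)
Definition felt (Sigma : finType) := option (seq Sigma).

Definition fext (Sigma : finType) (a : felt Sigma) (b : Sigma) : felt Sigma :=
  omap (fun alpha => rcons alpha b) a.

(* State of the variables of prefix-free IDS (the hypothesis M_t plays no
   role in the values of the E_i). *)
Record ids_state (Sigma : finType) := IdsState {
  st_i : nat;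
  st_v : nat -> seq Sigma;
  st_P : seq (seq Sigma);
  st_T : seq (seq Sigma);
  st_E : seq Sigma -> seq Sigma -> Prop }.

Section IDS.
Variables (Sigma : finType) (A : dfa Sigma).

Definition Eo (s : ids_state Sigma) (a : felt Sigma) : seq Sigma -> Prop :=
  match a with None => fun _ => False | Some alpha => st_E s alpha end.

Definition sameset (X Y : seq Sigma -> Prop) : Prop := forall w, X w <-> Y w.

Definition in_symdiff (X Y : seq Sigma -> Prop) (g : seq Sigma) : Prop :=
  (X g /\ ~ Y g) \/ (Y g /\ ~ X g).

Definition inPp (s : ids_state Sigma) (a : felt Sigma) : Prop :=
  match a with None => True | Some alpha => alpha \in st_P s end.

Definition refine_step (s s' : ids_state Sigma) : Prop :=
  exists (a c : felt Sigma) (b : Sigma) (g : seq Sigma),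
    [/\ inPp s a /\ inPp s c,
        sameset (Eo s a) (Eo s c),
        (~ sameset (Eo s (fext a b)) (Eo s (fext c b))),
        in_symdiff (Eo s (fext a b)) (Eo s (fext c b)) g &
        s' = IdsState (st_i s).+1
               (fun j => if j == (st_i s).+1 then b :: g else st_v s j)
               (st_P s) (st_T s)
               (fun a' w => if a' \in st_T s then
                              st_E s a' w \/ (w = b :: g /\ accepts A (a' ++ b :: g))
                            else st_E s a' w)].

Definition refine_terminal (s : ids_state Sigma) : Prop :=
  ~ exists (a c : felt Sigma) (b : Sigma),
      [/\ inPp s a, inPp s c, sameset (Eo s a) (Eo s c) &
          (~ sameset (Eo s (fext a b)) (Eo s (fext c b)))].

(* A complete (terminating) run of the refinement procedure from s to s';
   the list records the successive values taken by the variable i. *)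
Inductive refine_run : ids_state Sigma -> seq nat -> ids_state Sigma -> Prop :=
| rr_done s : refine_terminal s -> refine_run s [:: st_i s] s
| rr_step s s1 iv s' :
    refine_step s s1 -> refine_run s1 iv s' -> refine_run s (st_i s :: iv) s'.

Definition ids_init : ids_state Sigma :=
  IdsState 0 (fun _ => [::]) [:: [::]] ([::] :: [seq [:: b] | b <- enum Sigma])
    (fun alpha w => w = [::] /\ accepts A alpha).

Definition ids_add (s : ids_state Sigma) (alpha : seq Sigma) : ids_state Sigma :=
  IdsState (st_i s) (st_v s) (rcons (st_P s) alpha)
    (st_T s ++ alpha :: [seq rcons alpha b | b <- enum Sigma])
    (fun beta w => if beta \in st_T s then st_E s beta w
                   else exists j, [/\ j <= st_i s, w = st_v s j &
                                      accepts A (beta ++ st_v s j)]).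

(* An execution of prefix-free IDS on S:
   ivals`_t = successive values of i while k = t,
   ends`_t  = the state at the end of stage t (after the refinement). *)
Definition ids_exec (S : seq (seq Sigma)) (ivals : seq (seq nat))
    (ends : seq (ids_state Sigma)) : Prop :=
  [/\ size ivals = (size S).+1, size ends = (size S).+1,
      refine_run ids_init (nth [::] ivals 0) (nth ids_init ends 0) &
      forall t, t < size S ->
        refine_run (ids_add (nth ids_init ends t) (nth [::] S t))
                   (nth [::] ivals t.+1) (nth ids_init ends t.+1)].

(* K(n) = t : t is the least value of k while i has value n. *)
Definition reindexK (ivals : seq (seq nat)) (n t : nat) : Prop :=
  n \in nth [::] ivals t /\ forall t', n \in nth [::] ivals t' -> t <= t'.

Definition is_it (ivals : seq (seq nat)) (t n : nat) : Prop :=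
  reindexK ivals n t /\ forall m, reindexK ivals m t -> m <= n.

End IDS.

(* Whether lambda lies in E_i(alpha) never changes once alpha is in T_k: on
   entry E_i(alpha) contains v_0 = lambda exactly when alpha v_0 = alpha is in
   L(A), and refinement only adds the strings v_{i+1} = b gamma, which are
   never empty.  Since s_0, ..., s_t all belong to T_t, compatibility of M_t
   follows; the state reached at the end of stage t holds the values E_{i_t}. *)
From mathcomp Require Import all_boot.

Set Implicit Arguments.
Unset Strict Implicit.
Unset Printing Implicit Defensive.

Section LambdaMembership.
Variables (Sigma : finType) (A : dfa Sigma).

Definition lambda_compatible (s : ids_state Sigma) : Prop :=
  st_v s 0 = [::] /\
  forall alpha, alpha \in st_T s -> (st_E s alpha [::] <-> accepts A alpha).

Lemma refine_step_T s s' : refine_step A s s' -> st_T s' = st_T s.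
Proof. by case=> [a [c [b [g [_ _ _ _ ->]]]]]. Qed.

Lemma refine_step_lambda_compatible s s' :
  refine_step A s s' -> lambda_compatible s -> lambda_compatible s'.
Proof.
case=> [a [c [b [g [_ _ _ _ ->]]]]] [v0 HE]; split=> //= alpha Talpha.
have [E_acc acc_E] := HE alpha Talpha.
by rewrite Talpha; split=> [[/E_acc // | []] | /acc_E]; [|left].
Qed.

Lemma refine_run_T s iv s' : refine_run A s iv s' -> st_T s' = st_T s.
Proof. by elim=> // {}s s1 {}iv {}s' /refine_step_T <-. Qed.

Lemma refine_run_lambda_compatible s iv s' :
  refine_run A s iv s' -> lambda_compatible s -> lambda_compatible s'.
Proof.
elim=> // {}s s1 {}iv {}s' /refine_step_lambda_compatible step _ IH.
by move=> /step /IH.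
Qed.

Lemma ids_init_lambda_compatible : lambda_compatible (ids_init A).
Proof. by split=> //= alpha _; split=> [[] | ]. Qed.

Lemma ids_add_lambda_compatible s alpha :
  lambda_compatible s -> lambda_compatible (ids_add A s alpha).
Proof.
case=> v0 HE; split=> //= beta _; case: ifP => [T_beta | _]; first exact: HE.
split=> [[j [_ v_j_nil]] | Lbeta].
  by rewrite -v_j_nil cats0.
by exists 0; rewrite v0 cats0.
Qed.

Section Execution.
Variables (S : seq (seq Sigma)) (ivals : seq (seq nat))
  (ends : seq (ids_state Sigma)).
Hypothesis exec : ids_exec A S ivals ends.

Lemma ids_exec_lambda_compatible t :
  t <= size S -> lambda_compatible (nth (ids_init A) ends t).
Proof.
case: exec => _ _ run0 runS; elim: t => [_ | t IH St].
  exact: refine_run_lambda_compatible run0 ids_init_lambda_compatible.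
apply: refine_run_lambda_compatible (runS t St) _.
exact/ids_add_lambda_compatible/IH/ltnW.
Qed.

Lemma ids_exec_mem_T t j :
  t <= size S -> j <= t ->
  nth [::] ([::] :: S) j \in st_T (nth (ids_init A) ends t).
Proof.
case: exec => _ _ run0 runS; elim: t j => [j _ | t IH j St].
  by rewrite leqn0 => /eqP ->; rewrite (refine_run_T run0) mem_head.
rewrite (refine_run_T (runS t St)) /= mem_cat leq_eqVlt ltnS.
case/orP=> [/eqP -> | jt]; last by rewrite IH ?(ltnW St).
by rewrite /= mem_head orbT.
Qed.

End Execution.
End LambdaMembership.

Theorem mainTheorem6 (Sigma : finType) (A : dfa Sigma) (S : seq (seq Sigma))
    (ivals : seq (seq nat)) (ends : seq (ids_state Sigma)) :
  S != [::] ->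
  ids_exec A S ivals ends ->
  forall t n, t <= size S -> is_it ivals t n ->
  forall j, j <= t ->
    (accepts A (nth [::] ([::] :: S) j) <->
     st_E (nth (ids_init A) ends t) (nth [::] ([::] :: S) j) [::]).
Proof.
move=> _ exec t _ St _ j jt.
have [_ lambda_spec] := ids_exec_lambda_compatible exec St.
exact: iff_sym (lambda_spec _ (ids_exec_mem_T exec St jt)).
Qed.
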